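(* Let $\kappa$ be a regular cardinal and $M=\langle W,S\rangle$ a $\kappa$-downward directed multi-relational Kripke frame. Then $\theta_M:W\to\mathrm{At}(G(M))$, $\theta_M(w)=\{w\}$, is an isomorphism of multi-relational Kripke frames from $M$ to $F(G(M))$.
   Context: A multi-relational Kripke frame is a pair $\langle W,S\rangle$ with $W$ non-empty and $S$ a non-empty set of binary relations on $W$; it is $\kappa$-downward directed if for every $S'\subseteq S$ with $|S'|<\kappa$ there is $R\in S$ with $R\subseteq\bigcap S'$ (with $\bigcap\emptyset=W\times W$). A homomorphism $g:\langle W_1,S_1\rangle\to\langle W_2,S_2\rangle$ is a map $g:W_1\to W_2$ such that: (i) for every $x\in W_1$ and $R_2\in S_2$ there is $R_1\in S_1$ such that for all $y\in W_1$, $xR_1y$ implies $g(x)R_2g(y)$; (ii) for every $x\in W_1$ and $R_1\in S_1$ there is $R_2\in S_2$ such that for all $u\in W_2$, if $g(x)R_2u$ then there exists $y\in W_1$ with $xR_1y$ and $g(y)=u$. An isomorphism is a bijective homomorphism. $G(M)$ is the powerset Boolean algebra $\mathcal P(W)$ with $\Diamond_MX=\{w\mid\forall R\in S\ \exists x\in X\ (wRx)\}$; its atoms are the singletons. For a complete atomic modal algebra $A$, $F(A)=\langle\mathrm{At}(A),\{R(X)\mid X\subseteq A,|X|<\kappa\}\rangle$ with $a\,R(X)\,c\iff a\leq\bigwedge\{\Diamond x\mid x\in X,\ c\leq x\}$ (empty meet $=1$). *)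

From Stdlib Require Import Classical.
Set Implicit Arguments.

(* ---------- Cardinals (a cardinal kappa is represented by a type K) ---------- *)

Definition card_le (A B : Type) : Prop := exists f : A -> B, forall x y, f x = f y -> x = y.
Definition card_lt (A B : Type) : Prop := card_le A B /\ ~ card_le B A.

(* K is a regular cardinal: infinite, and a union (disjoint sum) of fewer than
   |K| sets each of size < |K| has size < |K|  (i.e. cf |K| = |K|). *)
Definition regular_cardinal (K : Type) : Prop :=
  card_le nat K /\
  forall (I : Type) (A : I -> Type),
    card_lt I K -> (forall i, card_lt (A i) K) -> card_lt {i : I & A i} K.

Definition rel (W : Type) := W -> W -> Prop.

Definition is_frame (W : Type) (S : rel W -> Prop) : Prop :=
  (exists w : W, True) /\ (exists R, S R).

(* kappa-downward directed, with  /\ emptyset = W x W *)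
Definition downward_directed (K : Type) (W : Type) (S : rel W -> Prop) : Prop :=
  forall S' : rel W -> Prop,
    (forall R, S' R -> S R) ->
    card_lt {R : rel W | S' R} K ->
    exists R, S R /\ forall x y, R x y -> forall R', S' R' -> R' x y.

Definition is_hom (W1 : Type) (S1 : rel W1 -> Prop)
                  (W2 : Type) (S2 : rel W2 -> Prop) (g : W1 -> W2) : Prop :=
  (forall (x : W1) (R2 : rel W2), S2 R2 ->
     exists R1, S1 R1 /\ forall y, R1 x y -> R2 (g x) (g y)) /\
  (forall (x : W1) (R1 : rel W1), S1 R1 ->
     exists R2, S2 R2 /\ forall u, R2 (g x) u -> exists y, R1 x y /\ g y = u).

Definition is_iso (W1 : Type) (S1 : rel W1 -> Prop)
                  (W2 : Type) (S2 : rel W2 -> Prop) (g : W1 -> W2) : Prop :=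
  is_hom S1 S2 g /\ (forall x y, g x = g y -> x = y) /\ (forall u, exists x, g x = u).

Definition pset (W : Type) := W -> Prop.
Definition subset {W : Type} (a b : pset W) : Prop := forall w, a w -> b w.

Definition Dia {W : Type} (S : rel W -> Prop) (X : pset W) : pset W :=
  fun w => forall R, S R -> exists x, X x /\ R w x.

Definition is_atom {W : Type} (a : pset W) : Prop :=
  (exists w, a w) /\
  forall b : pset W, subset b a -> (forall w, ~ b w) \/ (forall w, b w <-> a w).

Definition At (W : Type) : Type := {a : pset W | is_atom a}.

(* a R(X) c  iff  a <= /\ { Dia x | x in X, c <= x }  (empty meet = W) *)
Definition RX {W : Type} (S : rel W -> Prop) (X : pset W -> Prop) : rel (At W) :=
  fun a c => forall w, proj1_sig a w ->
               forall x, X x -> subset (proj1_sig c) x -> Dia S x w.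

Definition FG_rels (K : Type) {W : Type} (S : rel W -> Prop) : rel (At W) -> Prop :=
  fun R => exists X : pset W -> Prop, card_lt {x : pset W | X x} K /\ R = RX S X.

Lemma singleton_atom {W : Type} (w : W) : is_atom (fun v => v = w).
Proof.
  split; [exists w; reflexivity|].
  intros b Hb. destruct (classic (b w)) as [H|H].
  - right. intros v; split; [apply Hb|]. intros ->; exact H.
  - left. intros v Hv. pose proof (Hb v Hv) as E; simpl in E; subst; contradiction.
Qed.

Definition theta {W : Type} (w : W) : At W :=
  exist _ (fun v => v = w) (singleton_atom w).

(* The atoms of the powerset algebra are exactly the singletons, so theta is a
   bijection, and {x} R(X) {y} holds iff every Y in X containing y satisfies
   x \in Dia Y.  Forth: for each Y in X with x \notin Dia Y pick R_Y in S with
   R_Y[x] disjoint from Y; there are fewer than kappa of them, so directedness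
   yields R in S below all of them, and R-successors of x satisfy the
   condition.  Back: for R in S the one-element family X = {W \ R[x]} has
   {x} R(X) {y} only for y in R[x]. *)
From Stdlib Require Import Classical IndefiniteDescription
  FunctionalExtensionality PropExtensionality ProofIrrelevance.
Set Implicit Arguments.

Lemma card_le_lt_trans (A B C : Type) : card_le A B -> card_lt B C -> card_lt A C.
Proof.
  intros [f Hf] [[g Hg] HCB]. split.
  - exists (fun a => g (f a)). intros x y e. apply Hf, Hg, e.
  - intros [h Hh]. apply HCB. exists (fun c => f (h c)). intros x y e. apply Hh, Hf, e.
Qed.

Lemma card_le_sig_image (A B : Type) (f : A -> B) (P : B -> Prop) :
  (forall b, P b -> exists a, f a = b) -> card_le {b | P b} A.
Proof.
  intros Himg.
  destruct (functional_choice (fun (b : {b | P b}) a => f a = proj1_sig b))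
    as [g Hg].
  { intros [b Pb]. exact (Himg b Pb). }
  exists g. intros [b1 P1] [b2 P2] e.
  pose proof (Hg (exist _ b1 P1)) as E1. pose proof (Hg (exist _ b2 P2)) as E2.
  simpl in E1, E2. rewrite e, E2 in E1. subst b2.
  f_equal. apply proof_irrelevance.
Qed.

Lemma card_le_sig_subrel (A : Type) (P Q : A -> Prop) :
  (forall a, P a -> Q a) -> card_le {a | P a} {a | Q a}.
Proof.
  intros HPQ. exists (fun a => exist _ (proj1_sig a) (HPQ _ (proj2_sig a))).
  intros [a Pa] [b Pb] e. injection e as ->. f_equal. apply proof_irrelevance.
Qed.

Lemma card_lt_subsingleton (A K : Type) :
  card_le nat K -> (forall a b : A, a = b) -> card_lt A K.
Proof.
  intros [n Hn] HA. split.
  - exists (fun _ => n 0). intros a b _. apply HA.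
  - intros [h Hh]. assert (E : n 0 = n 1) by apply Hh, HA. discriminate (Hn _ _ E).
Qed.

Section Frame.

Variables (W : Type) (S : rel W -> Prop).

Lemma atom_is_singleton (a : pset W) : is_atom a -> exists w, forall v, a v <-> v = w.
Proof.
  intros [[w Hw] Hmin]. exists w.
  destruct (Hmin (fun v => v = w)) as [Hempty | Heq].
  - intros v ->. exact Hw.
  - destruct (Hempty w eq_refl).
  - intros v. symmetry. apply Heq.
Qed.

Lemma theta_injective (x y : W) : theta x = theta y -> x = y.
Proof.
  intros e. assert (E := f_equal (fun a => proj1_sig a x) e). simpl in E.
  rewrite <- E. reflexivity.
Qed.

Lemma theta_surjective (u : At W) : exists w, theta w = u.
Proof.
  destruct u as [a Ha]. destruct (atom_is_singleton Ha) as [w Hw]. exists w.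
  assert (E : (fun v => v = w) = a).
  { apply functional_extensionality. intros v.
    apply propositional_extensionality. symmetry. apply Hw. }
  subst a. unfold theta. f_equal. apply proof_irrelevance.
Qed.

Lemma RX_theta (X : pset W -> Prop) (x y : W) :
  RX S X (theta x) (theta y) <-> (forall Y, X Y -> Y y -> Dia S Y x).
Proof.
  unfold RX; simpl. split.
  - intros H Y HY Yy. apply (H x eq_refl Y HY). intros v ->. exact Yy.
  - intros H w -> Y HY Hsub. apply (H Y HY), Hsub. reflexivity.
Qed.

Lemma not_Dia_disjoint (Y : pset W) (x : W) :
  ~ Dia S Y x -> exists R, S R /\ forall z, R x z -> ~ Y z.
Proof.
  intros HY. apply not_all_ex_not in HY as [R HR].
  apply imply_to_and in HR as [SR HR].
  exists R. split; [exact SR|]. intros z Rxz Yz. apply HR. exists z. split; assumption.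
Qed.

Lemma downward_directed_family (K I : Type) (F : I -> rel W) :
  downward_directed K S -> card_lt I K -> (forall i, S (F i)) ->
  exists R, S R /\ forall x y, R x y -> forall i, F i x y.
Proof.
  intros Hdd HI HF.
  destruct (Hdd (fun R => exists i, F i = R)) as [R [SR HR]].
  - intros R [i <-]. apply HF.
  - apply card_le_lt_trans with I; [|exact HI].
    apply card_le_sig_image with F. trivial.
  - exists R. split; [exact SR|]. intros x y Rxy i.
    exact (HR x y Rxy (F i) (ex_intro _ i eq_refl)).
Qed.

Lemma forth_relation (K : Type) (X : pset W -> Prop) (x : W) :
  downward_directed K S -> card_lt {Y | X Y} K ->
  exists R, S R /\ forall y, R x y -> forall Y, X Y -> Y y -> Dia S Y x.
Proof.
  intros Hdd HX.
  set (I := {Y | X Y /\ ~ Dia S Y x}).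
  destruct (functional_choice
              (fun (i : I) R => S R /\ forall z, R x z -> ~ proj1_sig i z))
    as [F HF].
  { intros [Y HY]. exact (not_Dia_disjoint (proj2 HY)). }
  destruct (downward_directed_family (K := K) F Hdd) as [R [SR HR]].
  - apply card_le_lt_trans with {Y | X Y}; [|exact HX].
    apply card_le_sig_subrel. tauto.
  - intros i. apply HF.
  - exists R. split; [exact SR|]. intros y Rxy Y HY Yy.
    apply NNPP. intros HnY.
    set (i := exist _ Y (conj HY HnY) : I).
    exact (proj2 (HF i) y (HR x y Rxy i) Yy).
Qed.

Lemma back_relation (R : rel W) (x y : W) :
  S R -> RX S (fun Y => Y = (fun z => ~ R x z)) (theta x) (theta y) -> R x y.
Proof.
  intros SR Hxy. apply NNPP. intros Rxy.
  destruct (proj1 (RX_theta _ x y) Hxy (fun z => ~ R x z) eq_refl Rxy R SR)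
    as [z [nRxz Rxz]].
  exact (nRxz Rxz).
Qed.

End Frame.

Theorem theorem9p4 (K : Type) (W : Type) (S : rel W -> Prop) :
  regular_cardinal K ->
  is_frame S ->
  downward_directed K S ->
  is_iso S (FG_rels K S) (@theta W).
Proof.
  intros [Hinf _] _ Hdd.
  split; [split|split].
  - intros x R2 [X [HX ->]].
    destruct (forth_relation X x Hdd HX) as [R [SR HR]].
    exists R. split; [exact SR|].
    intros y Rxy. apply RX_theta, HR, Rxy.
  - intros x R SR.
    set (X := fun Y => Y = (fun z => ~ R x z)).
    exists (RX S X). split.
    + exists X. split; [|reflexivity].
      apply card_lt_subsingleton; [exact Hinf|].
      intros [Y1 H1] [Y2 H2]. unfold X in H1, H2. subst. f_equal; apply proof_irrelevance.
    + intros u Hu. destruct (theta_surjective u) as [y <-].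
      exists y. split; [exact (back_relation R SR Hu)|reflexivity].
  - apply theta_injective.
  - apply theta_surjective.
Qed.
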